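(* Let $n\ge 1$, $k\ge 2$, $\mathcal{K}$ a set of size $k$, $\epsilon\ge 0$ and $p=e^\epsilon/(k-1+e^\epsilon)$. Then the cascades of the full $k$-RR channel $\mathbf{N}$ and the shuffle channel $\mathbf{S}$ in either order are equivalent: $\mathbf{N}\mathbf{S}\equiv\mathbf{S}\mathbf{N}$.
   Context: A dataset is $x=(x_0,\dots,x_{n-1})\in\mathcal{K}^n$; its histogram $h(x)$ is the map $\kappa\mapsto|\{i:x_i=\kappa\}|$, and for a histogram $z$, $\#z$ is the number of datasets with histogram $z$. A channel from finite $\mathcal{X}$ to finite $\mathcal{Y}$ is a row-stochastic matrix; the cascade $\mathbf{C}\mathbf{D}$ of channels $\mathbf{C}:\mathcal{X}\to\mathcal{Y}$, $\mathbf{D}:\mathcal{Y}\to\mathcal{Z}$ is the ordinary matrix product. The full $k$-RR channel $\mathbf{N}:\mathcal{K}^n\to\mathcal{K}^n$ has $\mathbf{N}_{x,y}=\prod_{i=0}^{n-1}q(y_i\mid x_i)$ where $q(b\mid a)=p$ if $b=a$ and $q(b\mid a)=(1-p)/(k-1)$ otherwise. The shuffle channel $\mathbf{S}:\mathcal{K}^n\to\mathcal{K}^n$ has $\mathbf{S}_{x,y}=1/\#h(x)$ if $h(y)=h(x)$ and $0$ otherwise. For a prior $\pi$ on $\mathcal{X}$ and gain function $g:\mathcal{W}\times\mathcal{X}\to[0,\infty)$ ($\mathcal{W}$ finite nonempty), the posterior vulnerability of $\mathbf{C}$ is $V_g[\pi\triangleright\mathbf{C}]=\sum_{y}\max_{w\in\mathcal{W}}\sum_{x}\pi_x\mathbf{C}_{x,y}g(w,x)$.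 Channels $\mathbf{C},\mathbf{C}'$ with the same input set are equivalent ($\mathbf{C}\equiv\mathbf{C}'$) iff $V_g[\pi\triangleright\mathbf{C}]=V_g[\pi\triangleright\mathbf{C}']$ for all priors $\pi$ and all such gain functions $g$. *)

From HB Require Import structures.
From mathcomp Require Import all_boot all_order all_algebra.
From mathcomp Require Import reals sequences exp.

Set Implicit Arguments.
Unset Strict Implicit.
Unset Printing Implicit Defensive.

Import Order.TTheory GRing.Theory Num.Theory.
Local Open Scope ring_scope.

Section Defs.
Variable R : realType.

Definition channel (X Y : finType) := X -> Y -> R.

Definition is_channel (X Y : finType) (C : channel X Y) : Prop :=
  (forall x y, 0 <= C x y) /\ (forall x, \sum_(y : Y) C x y = 1).

Definition cascade (X Y Z : finType) (C : channel X Y) (D : channel Y Z)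
  : channel X Z := fun x z => \sum_(y : Y) C x y * D y z.

Definition is_prior (X : finType) (pi : X -> R) : Prop :=
  (forall x, 0 <= pi x) /\ \sum_(x : X) pi x = 1.

(* posterior g-vulnerability; the max over the finite nonempty set W of
   nonnegative reals is written as a fold of Num.max starting at 0, which
   equals the true maximum since all summands are nonnegative. *)
Definition post_vuln (X Y W : finType) (g : W -> X -> R) (pi : X -> R)
  (C : channel X Y) : R :=
  \sum_(y : Y) \big[Num.max/0]_(w : W) \sum_(x : X) pi x * C x y * g w x.

Definition chan_equiv (X Y Y' : finType) (C : channel X Y) (C' : channel X Y')
  : Prop :=
  forall (pi : X -> R), is_prior pi ->
  forall (W : finType), (0 < #|W|)%N ->
  forall (g : W -> X -> R), (forall w x, 0 <= g w x) ->
    post_vuln g pi C = post_vuln g pi C'.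

Definition dataset (K : finType) (n : nat) := {ffun 'I_n -> K}.

Definition hist (K : finType) (n : nat) (x : dataset K n) : {ffun K -> nat} :=
  [ffun kappa => #|[set i | x i == kappa]|].

Definition num_hist (K : finType) (n : nat) (z : {ffun K -> nat}) : nat :=
  #|[set y : dataset K n | hist y == z]|.

Definition krr_q (K : finType) (k : nat) (p : R) (a b : K) : R :=
  if b == a then p else (1 - p) / (k - 1)%:R.

Definition fullKRR (K : finType) (n k : nat) (p : R)
  : channel (dataset K n) (dataset K n) :=
  fun x y => \prod_(i < n) krr_q k p (x i) (y i).

Definition shuffle (K : finType) (n : nat)
  : channel (dataset K n) (dataset K n) :=
  fun x y => if hist y == hist x then ((num_hist n (hist x))%:R)^-1 else 0.

End Defs.

(* Both cascades are equal as matrices, for every value of p.  Write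
   [M(c, c') = sum_{h x = c, h y = c'} N x y].  Since N is invariant under a
   simultaneous permutation of the coordinates of its two arguments, the mass
   [sum_{h y = c'} N x y] depends on x only through h x, hence equals
   [M(h x, c') / #(h x)].  So [(N S) x z = M(h x, h z) / (#(h x) #(h z))] and,
   N being symmetric, [(S N) x z = M(h z, h x) / (#(h z) #(h x))]; M is
   symmetric for the same reason.  Nothing else about N is used. *)
From HB Require Import structures.
From mathcomp Require Import all_boot all_order all_algebra.
From mathcomp Require Import fingroup perm.
From mathcomp Require Import reals sequences exp.

Set Implicit Arguments.
Unset Strict Implicit.
Unset Printing Implicit Defensive.

Import Order.TTheory GRing.Theory Num.Theory.
Local Open Scope ring_scope.

Section Histograms.
Variables (K : finType) (n : nat).

Definition permd (s : {perm 'I_n}) (x : dataset K n) : dataset K n :=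
  [ffun i => x (s i)].

Lemma permd_inj s : injective (permd s).
Proof.
move=> x y /ffunP e; apply/ffunP => j.
by have := e ((s^-1)%g j); rewrite !ffunE permKV.
Qed.

Lemma hist_permd s x : hist (permd s x) = hist x.
Proof.
apply/ffunP => a; rewrite !ffunE.
rewrite -(card_preimset [set i | x i == a] (@perm_inj _ s)).
by apply: eq_card => i; rewrite !inE ffunE.
Qed.

Lemma hist_count (x : dataset K n) a :
  hist x a = count_mem a [tuple x i | i < n].
Proof.
rewrite /hist ffunE /= -map_comp count_map.
by rewrite cardsE cardE /enum_mem size_filter.
Qed.

Lemma eq_histP (x y : dataset K n) :
  hist x = hist y -> exists s : {perm 'I_n}, x = permd s y.
Proof.
move=> hxy.
have : perm_eq [tuple x i | i < n] [tuple y i | i < n].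
  by apply/allP => a _ /=; rewrite -!hist_count hxy.
case/tuple_permP => s hs; exists s; apply/ffunP => i.
move/(congr1 (fun t => nth (x i) t i)): hs.
by rewrite -!tnth_nth !tnth_mktuple ffunE.
Qed.

Lemma sum_hist_const (R : pzSemiRingType) c (a : R) :
  \sum_(y : dataset K n | hist y == c) a = (num_hist n c)%:R * a.
Proof.
rewrite (eq_bigl (fun y => y \in [set y : dataset K n | hist y == c])).
  by rewrite sumr_const mulr_natl.
by move=> y; rewrite inE.
Qed.

Lemma num_hist_neq0 (R : numDomainType) (x : dataset K n) :
  (num_hist n (hist x))%:R != 0 :> R.
Proof.
rewrite pnatr_eq0 -lt0n; apply/card_gt0P; exists x.
by rewrite inE.
Qed.

End Histograms.

Section ShuffleCommutes.
Variables (R : realType) (K : finType) (n : nat).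
Variable C : channel R (dataset K n) (dataset K n).
Local Notation S := (@shuffle R K n).
Local Notation card_class c := ((num_hist n c)%:R : R).

Lemma cascade_shuffle_r x z :
  cascade C S x z =
  (card_class (hist z))^-1 * \sum_(y | hist y == hist z) C x y.
Proof.
rewrite /cascade mulr_sumr [RHS]big_mkcond; apply: eq_bigr => y _ /=.
by rewrite /shuffle eq_sym; case: eqP => [->|_]; rewrite ?mulr0 // mulrC.
Qed.

Lemma cascade_shuffle_l x z :
  cascade S C x z =
  (card_class (hist x))^-1 * \sum_(y | hist y == hist x) C y z.
Proof.
rewrite /cascade mulr_sumr [RHS]big_mkcond; apply: eq_bigr => y _ /=.
by rewrite /shuffle; case: eqP => _; rewrite ?mul0r.
Qed.

Hypothesis C_permd : forall s x y, C (permd s x) (permd s y) = C x y.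
Hypothesis C_sym : forall x y, C x y = C y x.

Lemma class_sum_eq_hist x x' c : hist x = hist x' ->
  \sum_(y | hist y == c) C x y = \sum_(y | hist y == c) C x' y.
Proof.
case/eq_histP=> s ->.
rewrite [LHS](reindex_inj (@permd_inj _ _ s)) /=.
by apply: eq_big => y; rewrite ?hist_permd ?C_permd.
Qed.

Definition class_mass c c' :=
  \sum_(x | hist x == c) \sum_(y | hist y == c') C x y.

Lemma class_massE x c' :
  class_mass (hist x) c' = card_class (hist x) * \sum_(y | hist y == c') C x y.
Proof.
rewrite -sum_hist_const; apply: eq_bigr => x' /eqP.
exact: class_sum_eq_hist.
Qed.

Lemma class_massC c c' : class_mass c c' = class_mass c' c.
Proof.
rewrite /class_mass exchange_big /=.
by apply: eq_bigr => y _; apply: eq_bigr => x _; apply: C_sym.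
Qed.

Lemma shuffle_cascadeC x z : cascade C S x z = cascade S C x z.
Proof.
have sum_col : \sum_(y | hist y == hist x) C y z =
               (card_class (hist z))^-1 * class_mass (hist z) (hist x).
  rewrite class_massE mulKf ?num_hist_neq0 //.
  by apply: eq_bigr => y _; apply: C_sym.
rewrite cascade_shuffle_r cascade_shuffle_l sum_col -class_massC.
by rewrite class_massE mulrCA mulKf ?num_hist_neq0.
Qed.

End ShuffleCommutes.

Lemma fullKRR_sym (R : realType) (K : finType) n k (p : R)
    (x y : dataset K n) :
  @fullKRR R K n k p x y = @fullKRR R K n k p y x.
Proof. by apply: eq_bigr => i _; rewrite /krr_q eq_sym. Qed.

Lemma fullKRR_permd (R : realType) (K : finType) n k (p : R) s
    (x y : dataset K n) :
  @fullKRR R K n k p (permd s x) (permd s y) = @fullKRR R K n k p x y.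
Proof.
rewrite /fullKRR [RHS](reindex_inj (@perm_inj _ s)) /=.
by apply: eq_bigr => i _; rewrite !ffunE.
Qed.

Lemma chan_equiv_eq (R : realType) (X Y : finType) (C C' : channel R X Y) :
  (forall x y, C x y = C' x y) -> chan_equiv C C'.
Proof.
move=> eqC pi _ W _ g _; rewrite /post_vuln.
by apply: eq_bigr => y _; apply: eq_bigr => w _; apply: eq_bigr => x _; rewrite eqC.
Qed.

Theorem mainTheorem2 (R : realType) (K : finType) (n k : nat)
  (hn : (1 <= n)%N) (hk : (2 <= k)%N) (hK : #|K| = k)
  (eps : R) (heps : 0 <= eps) (p : R)
  (hp : p = expR eps / ((k - 1)%:R + expR eps)) :
  chan_equiv (cascade (@fullKRR R K n k p) (@shuffle R K n))
             (cascade (@shuffle R K n) (@fullKRR R K n k p)).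
Proof.
apply: chan_equiv_eq; apply: shuffle_cascadeC.
- exact: fullKRR_permd.
- exact: fullKRR_sym.
Qed.
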